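(* Let $V$ be a finite dimensional real vector space, let $S$ be a commutative subsemigroup of $GL(V)$ and let $G$ be its Zariski closure in $GL(V)$. Suppose that the orbit $Sx=\{sx: s\in S\}$ of some $x\in V$ is somewhere dense in $V$ (its closure contains a non-empty open subset of $V$). Then the map $G\to Gx$, $g\mapsto gx$, is a diffeomorphism of $G$ onto an open subset of $V$. In particular, $S$ is somewhere dense in $G$ (its closure in $G$ contains a non-empty open subset of $G$). *)

From HB Require Import structures.
From mathcomp Require Import all_boot all_order all_algebra.
From mathcomp Require Import all_classical all_reals all_analysis.
Set Implicit Arguments. Unset Strict Implicit. Unset Printing Implicit Defensive.
Import Order.TTheory GRing.Theory Num.Theory.
Import numFieldNormedType.Exports.
Local Open Scope classical_set_scope.
Local Open Scope ring_scope.

(* V = R^n realized as column vectors 'cV[R]_n; GL(V) = invertible n x n matrices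
   acting by left multiplication. *)

Inductive polyfun (R : realType) (n : nat) : ('M[R]_n -> R) -> Prop :=
  | polyfun_cst (c : R) : polyfun (fun _ => c)
  | polyfun_coord (i j : 'I_n) : polyfun (fun A => A i j)
  | polyfun_add p q : polyfun p -> polyfun q -> polyfun (fun A => p A + q A)
  | polyfun_mul p q : polyfun p -> polyfun q -> polyfun (fun A => p A * q A).

(* Zariski closure of S in GL_n(R): invertible matrices on which every polynomial
   function vanishing on S vanishes. (Zariski-closed subsets of GL_n are the
   traces on GL_n of Zariski-closed subsets of M_n, since det is invertible there.) *)
Definition zariski_closure_GL (R : realType) (n : nat) (S : set 'M[R]_n)
  : set 'M[R]_n :=
  [set g | g \in unitmx /\
     forall p, polyfun p -> (forall s, S s -> p s = 0) -> p g = 0].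

Definition comm_subsemigroup_GL (R : realType) (n : nat) (S : set 'M[R]_n) : Prop :=
  (forall s, S s -> s \in unitmx) /\
  (forall s t, S s -> S t -> S (s *m t)) /\
  (forall s t, S s -> S t -> s *m t = t *m s).

Definition somewhere_dense (T : topologicalType) (A : set T) : Prop :=
  exists O : set T, open O /\ O !=set0 /\ O `<=` closure A.

Fixpoint Ck (R : realType) (U W : normedModType R) (k : nat) (D : set U)
    (f : U -> W) : Prop :=
  match k with
  | 0 => {within D, continuous f}
  | k'.+1 => (forall y, D y -> differentiable f y) /\
             forall v : U, Ck k' D (fun y => 'D_v f y)
  end.

Definition smooth_on (R : realType) (U W : normedModType R) (D : set U)
    (f : U -> W) : Prop := forall k, Ck k D f.

(* The orbit map g |-> g x has an explicit linear inverse.  Polynomials vanishing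
   on a somewhere dense subset of V vanish identically (they restrict to
   polynomials on lines), so the vectors s x (s in S) span V and finitely many
   s_1 x, ..., s_m x already do.  Every g in the Zariski closure G commutes with
   S, hence g s_i x = s_i g x, and a left inverse of the matrix with rows s_i x
   turns this into a linear map psi with psi (g x) = g.  Since p o psi vanishes
   on S x whenever the polynomial p vanishes on S, psi maps V into the Zariski
   closure of S in M_n; also psi v x = v.  Hence G x is the open set
   {v | det (psi v) <> 0}, the orbit map and psi are linear, hence smooth, and
   psi carries the part of V where S x is dense onto a part of G where S is. *)

From HB Require Import structures.
From mathcomp Require Import all_boot all_order all_algebra.
From mathcomp Require Import all_classical all_reals all_analysis.
From mathcomp Require Import ring.

Set Implicit Arguments.
Unset Strict Implicit.
Unset Printing Implicit Defensive.

Import Order.TTheory GRing.Theory Num.Theory.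
Import numFieldNormedType.Exports.
Local Open Scope classical_set_scope.
Local Open Scope ring_scope.

Section Topology.
Variable R : realType.

Lemma continuous_closure_image (T U : topologicalType) (f : T -> U) (E : set T) :
  continuous f -> f @` closure E `<=` closure (f @` E).
Proof.
move=> fc _ [v cEv <-] B /fc /cEv [e [Ee Be]].
by exists (f e); split => //; exists e.
Qed.

Lemma continuous_sum (T : topologicalType) (W : normedModType R) (I : Type)
    (r : seq I) (F : I -> T -> W) :
  (forall i, continuous (F i)) -> continuous (fun y => \sum_(i <- r) F i y).
Proof. by move=> Fc; apply: continuous_big => //; exact: add_continuous. Qed.

Lemma linear_mx_continuous (a b : nat) (W : normedModType R)
    (f : 'M[R]_(a, b) -> W) :
  linear f -> continuous f.
Proof.
move=> lf.
pose fL : {linear 'M[R]_(a, b) -> W} :=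
  HB.pack f (GRing.isLinear.Build _ _ _ _ _ lf).
have -> : f = fun A => \sum_i \sum_j A i j *: f (delta_mx i j).
  apply/funext => A; rewrite {1}[A]matrix_sum_delta.
  rewrite [f _](linear_sum fL); apply: eq_bigr => i _.
  rewrite [fL _]linear_sum; apply: eq_bigr => j _.
  by rewrite [fL _]linearZ.
apply: continuous_sum => i; apply: continuous_sum => j A.
by apply: continuousZ; [exact: coord_continuous|exact: cst_continuous].
Qed.

Lemma Ck_cst (U W : normedModType R) k (D : set U) (c : W) :
  Ck k D (fun _ => c).
Proof.
elim: k c => [|k IH] c /=.
  exact/continuous_subspaceT/cst_continuous.
split=> [y _|v]; first exact: differentiable_cst.
under eq_fun do rewrite derive_cst.
exact: IH.
Qed.

Lemma smooth_on_linear (U W : normedModType R) (D : set U) (f : U -> W) :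
  linear f -> continuous f -> smooth_on D f.
Proof.
move=> lf cf [|k] /=; first exact: continuous_subspaceT.
pose fL : {linear U -> W} := HB.pack f (GRing.isLinear.Build _ _ _ _ _ lf).
have df y : differentiable f y := @linear_differentiable _ _ _ fL y cf.
split=> [y _|v]; first exact: df.
have -> : (fun y => 'D_v f y) = (fun _ => f v).
  by apply/funext => y; rewrite (deriveE v (df y)) (@diff_lin _ _ _ fL y cf).
exact: Ck_cst.
Qed.

End Topology.

Section PolynomialFunctions.
Variables (R : realType) (n : nat).
Implicit Types (p : 'M[R]_n -> R).

Lemma polyfun_sum (I : Type) (r : seq I) (F : I -> 'M[R]_n -> R) :
  (forall i, polyfun (F i)) -> polyfun (fun A => \sum_(i <- r) F i A).
Proof.
move=> HF; elim: r => [|i r IH].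
  by under eq_fun do rewrite big_nil; exact: polyfun_cst.
by under eq_fun do rewrite big_cons; exact: polyfun_add.
Qed.

Lemma polyfun_prod (I : Type) (r : seq I) (F : I -> 'M[R]_n -> R) :
  (forall i, polyfun (F i)) -> polyfun (fun A => \prod_(i <- r) F i A).
Proof.
move=> HF; elim: r => [|i r IH].
  by under eq_fun do rewrite big_nil; exact: polyfun_cst.
by under eq_fun do rewrite big_cons; exact: polyfun_mul.
Qed.

Lemma polyfun_linear (f : 'M[R]_n -> R) : scalar f -> polyfun f.
Proof.
move=> lf.
pose fL : {linear 'M[R]_n -> R^o} :=
  HB.pack (f : _ -> R^o) (GRing.isLinear.Build _ _ _ _ _ lf).
have -> : f = fun A => \sum_i \sum_j A i j * f (delta_mx i j).
  apply/funext => A; rewrite {1}[A]matrix_sum_delta.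
  rewrite [f _](linear_sum fL); apply: eq_bigr => i _.
  rewrite [fL _]linear_sum; apply: eq_bigr => j _.
  by rewrite [fL _]linearZ.
apply: polyfun_sum => i; apply: polyfun_sum => j.
exact/polyfun_mul/polyfun_cst/polyfun_coord.
Qed.

Lemma polyfun_det : polyfun (fun A : 'M[R]_n => \det A).
Proof.
apply: polyfun_sum => s; apply/polyfun_mul; first exact: polyfun_cst.
by apply: polyfun_prod => i; exact: polyfun_coord.
Qed.

Lemma polyfun_continuous p : polyfun p -> continuous p.
Proof.
elim=> [c|i j|p1 q1 _ hp _ hq|p1 q1 _ hp _ hq] A.
- exact: cst_continuous.
- exact: coord_continuous.
- by apply: (@continuousD _ R^o); [exact: hp|exact: hq].
- by apply: continuousM; [exact: hp|exact: hq].
Qed.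

End PolynomialFunctions.

Section VanishingOnSomewhereDense.
Variable R : realType.

Definition polynomial_on_lines (V : lmodType R) (h : V -> R) :=
  forall v w, exists q : {poly R}, forall t, h (v + t *: w) = q.[t].

Lemma linear_polynomial_on_lines (V : lmodType R) (h : V -> R) :
  scalar h -> polynomial_on_lines h.
Proof.
move=> lh v w; exists ((h v)%:P + (h w)%:P * 'X) => t.
by rewrite addrC lh addrC !hornerE mulrC.
Qed.

Lemma polyfun_linear_polynomial_on_lines (V : lmodType R) n
    (Phi : V -> 'M[R]_n) (p : 'M[R]_n -> R) :
  linear Phi -> polyfun p -> polynomial_on_lines (p \o Phi).
Proof.
move=> lPhi; elim=> [c|i j|p1 q1 _ hp _ hq|p1 q1 _ hp _ hq] v w /=.
- by exists c%:P => t; rewrite hornerE.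
- exists ((Phi v i j)%:P + (Phi w i j)%:P * 'X) => t.
  by rewrite addrC lPhi addrC !mxE !hornerE mulrC.
- have [q1' h1] := hp v w; have [q2' h2] := hq v w.
  by exists (q1' + q2') => t; rewrite hornerD -h1 -h2.
- have [q1' h1] := hp v w; have [q2' h2] := hq v w.
  by exists (q1' * q2') => t; rewrite hornerM -h1 -h2.
Qed.

Lemma poly_eq0_near0 (q : {poly R}) (d : R) :
  0 < d -> (forall t, `|t| < d -> q.[t] = 0) -> q = 0.
Proof.
move=> d0 qd; apply/eqP/negPn/negP => qn0.
pose rs := mkseq (fun k : nat => d / k.+2%:R) (size q).
suff : (size rs < size q)%N by rewrite size_mkseq ltnn.
apply: max_poly_roots => //.
  apply/allP => _ /mapP [k _ ->]; apply/eqP/qd.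
  rewrite ger0_norm ?divr_ge0 ?(ltW d0) //.
  by rewrite ltr_pdivrMr ?ltr0n // ltr_pMr // ltr1n.
apply: mkseq_uniq => a b /eqP; rewrite eqr_div ?pnatr_eq0 ?lt0r_neq0 //.
by rewrite (inj_eq (mulfI (lt0r_neq0 d0))) eqr_nat => /eqP [].
Qed.

Lemma somewhere_dense_polynomial_eq0 (V : normedModType R) (E : set V)
    (h : V -> R) :
  somewhere_dense E -> continuous h -> polynomial_on_lines h ->
  (forall v, E v -> h v = 0) -> forall v, h v = 0.
Proof.
move=> [U [oU [[v0 Uv0] UE]]] hc hlines hE.
have hU u : U u -> h u = 0.
  move=> /UE cEu; have := continuous_closure_image hc (ex_intro2 _ _ u cEu erefl).
  have hE0 : h @` E `<=` [set x | x = 0] by move=> _ [e Ee <-]; exact: hE.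
  by move/(closureS hE0); rewrite -(closure_id [set x | x = 0]).1 //; exact: closed_eq.
have [e e0 eU] := (nbhs_ballP _ _).1 (open_nbhs_nbhs (conj oU Uv0)).
move=> v; set w := v - v0.
have [q hq] := hlines v0 w.
have -> : v = v0 + 1 *: w by rewrite scale1r addrC subrK.
rewrite hq (@poly_eq0_near0 q (e / (`|w| + 1))) ?horner0 //.
  by rewrite divr_gt0 // ltr_wpDl.
move=> t tlt; rewrite -hq hU //; apply: eU.
rewrite -ball_normE /ball_ /= opprD addrA subrr sub0r normrN normrZ.
rewrite ltr_pdivlMr ?ltr_wpDl // in tlt.
by apply: le_lt_trans tlt; rewrite ler_wpM2l // lerDl.
Qed.

End VanishingOnSomewhereDense.

Section SpanningOrbit.
Variables (R : realType) (n : nat) (T : Type) (S : set T) (F : T -> 'cV[R]_n).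

Definition rows_of m (f : 'I_m -> T) : 'M[R]_(m, n) := \matrix_i (F (f i))^T.

Lemma exists_rank_maximal_family :
  exists m (f : 'I_m -> T), (forall i, S (f i)) /\
    forall s, S s -> ((F s)^T <= rows_of f)%MS.
Proof.
pose P r := `[< exists m (f : 'I_m -> T),
                  (forall i, S (f i)) /\ \rank (rows_of f) = r >].
have P0 : P 0%N.
  apply/asboolP; exists 0%N, (ffun0 (card_ord 0)).
  by split=> [[] //|]; rewrite (flatmx0 (rows_of _)) mxrank0.
have P_le_n r : P r -> (r <= n)%N by move=> /asboolP [m [f [_ <-]]]; exact: rank_leq_col.
case: (ex_maxnP (ex_intro P 0%N P0) P_le_n) => r /asboolP [m [f [Sf rk]]] maxr.
exists m, f; split=> // s Ss.
pose f' (k : 'I_(m + 1)) := if fintype.split k is inl k' then f k' else s.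
have rows_f' : rows_of f' = col_mx (rows_of f) (F s)^T.
  apply/matrixP => i j; rewrite !mxE /f'.
  by case: (fintype.split i) => k; rewrite ?(ord1 k) !mxE.
have rk_f' : (\rank (rows_of f') <= r)%N.
  apply/maxr/asboolP; exists (m + 1)%N, f'; split=> // k.
  by rewrite /f'; case: (fintype.split k).
have sub_f : (rows_of f <= col_mx (rows_of f) (F s)^T)%MS.
  by rewrite -addsmxE addsmxSl.
have /esym := geq_leqif (mxrank_leqif_sup sub_f).
by rewrite -rows_f' rk rk_f' rows_f' col_mx_sub => /andP [].
Qed.

Lemma somewhere_dense_row_full m (N : 'M[R]_(m, n)) :
  somewhere_dense (F @` S) -> (forall s, S s -> ((F s)^T <= N)%MS) ->
  row_full N.
Proof.
move=> dense sub; apply: contraT; rewrite -cokermx_eq0 => /matrix0Pn [i [j Kij]].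
pose h (v : 'cV[R]_n) := (v^T *m cokermx N) 0 j.
have lin_h : scalar h by move=> a u v; rewrite /h linearP mulmxDl -scalemxAl !mxE.
have h0 : forall v, h v = 0.
  apply: (somewhere_dense_polynomial_eq0 dense).
  - by apply: linear_mx_continuous => a u v; rewrite [h _]lin_h.
  - exact: linear_polynomial_on_lines.
  - move=> _ [s Ss <-]; rewrite /h; have [D ->] := submxP (sub s Ss).
    by rewrite -mulmxA mulmx_coker mulmx0 mxE.
have := h0 (delta_mx i 0); rewrite /h trmx_delta -rowE mxE => Kij0.
by rewrite Kij0 eqxx in Kij.
Qed.

Lemma exists_spanning_family :
  somewhere_dense (F @` S) ->
  exists m (f : 'I_m -> T) (B : 'M[R]_(n, m)),
    (forall i, S (f i)) /\ B *m rows_of f = 1%:M.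
Proof.
move=> dense; have [m [f [Sf sub]]] := exists_rank_maximal_family.
have /row_fullP [B HB] := somewhere_dense_row_full dense sub.
by exists m, f, B.
Qed.

End SpanningOrbit.

Section ZariskiClosure.
Variables (R : realType) (n : nat) (S : set 'M[R]_n).
Local Notation G := (zariski_closure_GL S).

Lemma zariski_closure_sub : (forall s, S s -> s \in unitmx) -> S `<=` G.
Proof. by move=> Sunit s Ss; split=> [|p _]; [exact: Sunit | apply]. Qed.

Lemma zariski_closure_centralizes g s :
  (forall s t, S s -> S t -> s *m t = t *m s) -> G g -> S s -> g *m s = s *m g.
Proof.
move=> Scomm [_ Gp] Ss; apply/matrixP => i j; apply/eqP; rewrite -subr_eq0.
apply/eqP/(Gp (fun A => (A *m s) i j - (s *m A) i j)).
- apply: polyfun_linear => a A A'.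
  by rewrite mulmxDl mulmxDr -scalemxAl -scalemxAr !mxE; ring.
- by move=> t St; rewrite (Scomm _ _ St Ss) subrr.
Qed.

End ZariskiClosure.

Section OrbitInverse.
Variables (R : realType) (n m : nat) (f : 'I_m -> 'M[R]_n) (B : 'M[R]_(n, m)).

(* When [B] is a left inverse of the matrix with rows [(f i *m x)^T], this
   recovers [a] from [a *m x] for every [a] commuting with the [f i]. *)
Definition orbit_inverse (v : 'cV[R]_n) : 'M[R]_n :=
  (B *m rows_of (mulmx^~ v) f)^T.

Lemma orbit_inverse_linear : linear orbit_inverse.
Proof.
move=> a u v; rewrite /orbit_inverse.
have -> : rows_of (mulmx^~ (a *: u + v)) f =
          a *: rows_of (mulmx^~ u) f + rows_of (mulmx^~ v) f.
  apply/row_matrixP => i.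
  by rewrite linearP /rows_of /= !rowK mulmxDr -scalemxAr linearP.
by rewrite mulmxDr -scalemxAr linearP.
Qed.

Lemma orbit_inverse_continuous : continuous orbit_inverse.
Proof. exact/linear_mx_continuous/orbit_inverse_linear. Qed.

Lemma orbit_inverse_mulmx (x : 'cV[R]_n) a :
  B *m rows_of (mulmx^~ x) f = 1%:M -> (forall i, a *m f i = f i *m a) ->
  orbit_inverse (a *m x) = a.
Proof.
move=> HB fa; rewrite /orbit_inverse.
have -> : rows_of (mulmx^~ (a *m x)) f = rows_of (mulmx^~ x) f *m a^T.
  by apply/row_matrixP => i; rewrite row_mul !rowK mulmxA -fa -mulmxA trmx_mul.
by rewrite mulmxA HB mul1mx trmxK.
Qed.

End OrbitInverse.

Section DenseOrbit.
Variables (R : realType) (n m : nat) (S : set 'M[R]_n) (x : 'cV[R]_n).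
Variables (f : 'I_m -> 'M[R]_n) (B : 'M[R]_(n, m)).
Hypothesis Sunit : forall s, S s -> s \in unitmx.
Hypothesis Scomm : forall s t, S s -> S t -> s *m t = t *m s.
Hypothesis Sx_dense : somewhere_dense [set s *m x | s in S].
Hypothesis Sf : forall i, S (f i).
Hypothesis HB : B *m rows_of (mulmx^~ x) f = 1%:M.

Local Notation G := (zariski_closure_GL S).
Local Notation psi := (orbit_inverse f B).

Lemma orbit_inverse_zariski g : G g -> psi (g *m x) = g.
Proof.
move=> Gg; apply: orbit_inverse_mulmx HB _ => i.
exact: zariski_closure_centralizes Scomm Gg (Sf i).
Qed.

Lemma polyfun_orbit_inverse_eq0 p v :
  polyfun p -> (forall s, S s -> p s = 0) -> p (psi v) = 0.
Proof.
move=> pp pS; move: v; apply: (somewhere_dense_polynomial_eq0 Sx_dense).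
- move=> v; apply: continuous_comp; first exact: orbit_inverse_continuous.
  exact: polyfun_continuous.
- exact/polyfun_linear_polynomial_on_lines/pp/orbit_inverse_linear.
- move=> _ [s Ss <-]; rewrite orbit_inverse_zariski ?pS //.
  exact: zariski_closure_sub.
Qed.

Lemma orbit_inverseK v : psi v *m x = v.
Proof.
apply/matrixP => i j; apply/eqP; rewrite -subr_eq0; apply/eqP; move: v.
pose h v := (psi v *m x) i j - v i j.
have lin_h : scalar h.
  by move=> a u v; rewrite /h orbit_inverse_linear mulmxDl -scalemxAl !mxE; ring.
apply: (somewhere_dense_polynomial_eq0 Sx_dense (h := h)).
- by apply: linear_mx_continuous => a u v; rewrite [h _]lin_h.
- exact: linear_polynomial_on_lines.
- move=> _ [s Ss <-]; rewrite /h orbit_inverse_zariski ?subrr //.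
  exact: zariski_closure_sub.
Qed.

Lemma zariski_orbitE :
  [set g *m x | g in G] = (fun v => \det (psi v)) @^-1` [set r | r != 0].
Proof.
apply/seteqP; split=> [_ [g Gg <-] | v /= detv].
  by rewrite /= orbit_inverse_zariski // -unitfE -unitmxE; case: Gg.
exists (psi v); last exact: orbit_inverseK.
split=> [|p pp pS]; first by rewrite unitmxE unitfE.
exact: polyfun_orbit_inverse_eq0.
Qed.

Lemma zariski_closure_somewhere_dense :
  exists O : set 'M[R]_n, open O /\ (G `&` O) !=set0 /\ G `&` O `<=` closure S.
Proof.
have SG := zariski_closure_sub Sunit.
have [U [oU [[v Uv] UE]]] := Sx_dense.
exists ((fun g => g *m x) @^-1` U); split.
  by apply: open_comp => // g _; apply: linear_mx_continuous => a A A';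
     rewrite mulmxDl scalemxAl.
split.
  have [_ [[s Ss <-] Usx]] := UE v Uv U (open_nbhs_nbhs (conj oU Uv)).
  by exists s; split=> //; exact: SG.
move=> g [Gg /UE cl_gx]; rewrite -(orbit_inverse_zariski Gg).
have := continuous_closure_image (@orbit_inverse_continuous _ _ _ f B)
  (ex_intro2 _ _ _ cl_gx erefl).
apply: closureS => _ [_ [s Ss <-] <-].
by rewrite orbit_inverse_zariski //; exact: SG.
Qed.

End DenseOrbit.

Theorem proposition3p2 (R : realType) (n : nat) (S : set 'M[R]_n) (x : 'cV[R]_n) :
  comm_subsemigroup_GL S ->
  somewhere_dense [set s *m x | s in S] ->
  let G := zariski_closure_GL S in
  (* g |-> g x is injective on G *)
  (forall g h, G g -> G h -> g *m x = h *m x -> g = h) /\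
  (* its image G x is open in V *)
  open [set g *m x | g in G] /\
  (* it is smooth *)
  smooth_on setT (fun g : 'M[R]_n => g *m x) /\
  (* its inverse G x -> G is smooth (as a map into M_n(R) ⊇ G) *)
  (exists psi : 'cV[R]_n -> 'M[R]_n,
      (forall g, G g -> psi (g *m x) = g) /\
      smooth_on [set g *m x | g in G] psi) /\
  (* in particular S is somewhere dense in G (subspace topology) *)
  (exists O : set 'M[R]_n, open O /\ (G `&` O) !=set0 /\ G `&` O `<=` closure S).
Proof.
move=> [Sunit [_ Scomm]] dense G.
have [m [f [B [Sf HB]]]] := exists_spanning_family dense.
have psiG := orbit_inverse_zariski Scomm Sf HB.
have act_lin : linear (fun g : 'M[R]_n => g *m x).
  by move=> a u v; rewrite mulmxDl scalemxAl.
split=> [g h Gg Gh gh|]; first by rewrite -(psiG g Gg) -(psiG h Gh) gh.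
split.
  rewrite (zariski_orbitE Sunit Scomm dense Sf HB).
  apply: open_comp; last exact: open_neq.
  move=> w _; apply: continuous_comp; first exact: orbit_inverse_continuous.
  exact: polyfun_continuous (polyfun_det R n) _.
split; first exact: smooth_on_linear act_lin (linear_mx_continuous act_lin).
split; last exact: zariski_closure_somewhere_dense Sunit Scomm dense Sf HB.
exists (orbit_inverse f B); split=> //.
exact/smooth_on_linear/orbit_inverse_continuous/orbit_inverse_linear.
Qed.
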